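(* Let $A=(A,\wedge,\vee,\cdot,\to,1)$ be an algebra of type $(2,2,2,2,0)$ satisfying conditions (1)–(8) below. Then $A$ satisfies condition (9) if and only if for all $a,b,c,d\in A$, $(a\to b)\cdot(c\to d)\le (a\cdot c)\to(b\cdot d)$.
   Context: Conditions, for all $a,b,c\in A$: (1) $(A,\wedge,\vee)$ is a distributive lattice (with order $\le$); (2) $1$ is its largest element; (3) $(A,\cdot,1)$ is a commutative monoid; (4) $(a\to b)\wedge(a\to c)=a\to(b\wedge c)$; (5) $(a\to c)\wedge(b\to c)=(a\vee b)\to c$; (6) $a\to a=1$; (7) $(a\vee b)\cdot c=(a\cdot c)\vee(b\cdot c)$; (8) $(a\to b)\cdot(b\to c)\le a\to c$; (9) $a\to b\le (a\cdot c)\to(b\cdot c)$. *)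

Section Alg.
Variables (A : Type) (meet join mul imp : A -> A -> A) (one : A).

(* (1) (A, meet, join) is a distributive lattice. *)
Definition distr_lattice : Prop :=
  (forall a b, meet a b = meet b a) /\
  (forall a b, join a b = join b a) /\
  (forall a b c, meet a (meet b c) = meet (meet a b) c) /\
  (forall a b c, join a (join b c) = join (join a b) c) /\
  (forall a b, meet a (join a b) = a) /\
  (forall a b, join a (meet a b) = a) /\
  (forall a b c, meet a (join b c) = join (meet a b) (meet a c)).

Definition lat_le (a b : A) : Prop := meet a b = a.

Definition cond1to8 : Prop :=
  distr_lattice /\
  (forall a, lat_le a one) /\                                         (* (2) *)
  ((forall a b c, mul a (mul b c) = mul (mul a b) c) /\
   (forall a b, mul a b = mul b a) /\ (forall a, mul a one = a)) /\    (* (3) *)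
  (forall a b c, meet (imp a b) (imp a c) = imp a (meet b c)) /\       (* (4) *)
  (forall a b c, meet (imp a c) (imp b c) = imp (join a b) c) /\       (* (5) *)
  (forall a, imp a a = one) /\                                         (* (6) *)
  (forall a b c, mul (join a b) c = join (mul a c) (mul b c)) /\       (* (7) *)
  (forall a b c, lat_le (mul (imp a b) (imp b c)) (imp a c)).          (* (8) *)

Definition cond9 : Prop :=
  forall a b c, lat_le (imp a b) (imp (mul a c) (mul b c)).

End Alg.


(* Multiplication is monotone in each argument (by (7) and commutativity), so
   (a -> b)(c -> d) <= (ac -> bc)(bc -> bd) <= ac -> bd by (9) twice and (8).
   Conversely, taking c = d gives (a -> b)(c -> c) = a -> b by (6). *)

Section LatticeMonoid.
Variables (A : Type) (meet join mul : A -> A -> A).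
Local Notation le := (lat_le A meet).

Hypotheses (meetC : forall a b, meet a b = meet b a)
           (joinC : forall a b, join a b = join b a)
           (meetA : forall a b c, meet a (meet b c) = meet (meet a b) c)
           (meetKU : forall a b, meet a (join a b) = a)
           (joinKI : forall a b, join a (meet a b) = a)
           (mulC : forall a b, mul a b = mul b a)
           (mulDl : forall a b c, mul (join a b) c = join (mul a c) (mul b c)).

Lemma le_trans x y z : le x y -> le y z -> le x z.
Proof. unfold lat_le; intros Hxy Hyz. rewrite <- Hxy, <- meetA, Hyz. reflexivity. Qed.

Lemma le_join x y : le x y -> join x y = y.
Proof. unfold lat_le; intros Hxy. rewrite <- Hxy, joinC, meetC. apply joinKI. Qed.

Lemma join_le x y : join x y = y -> le x y.
Proof. unfold lat_le; intros Hxy. rewrite <- Hxy. apply meetKU. Qed.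

Lemma mul_le_monol x y z : le x y -> le (mul x z) (mul y z).
Proof. intros Hxy. apply join_le. rewrite <- mulDl, (le_join x y Hxy). reflexivity. Qed.

Lemma mul_le_monor x y z : le x y -> le (mul z x) (mul z y).
Proof. intros Hxy. rewrite (mulC z x), (mulC z y). apply mul_le_monol, Hxy. Qed.

End LatticeMonoid.

Theorem lemma2p7 (A : Type) (meet join mul imp : A -> A -> A) (one : A) :
  cond1to8 A meet join mul imp one ->
  (cond9 A meet mul imp <->
   forall a b c d : A,
     lat_le A meet (mul (imp a b) (imp c d)) (imp (mul a c) (mul b d))).
Proof.
  intros [[meetC [joinC [meetA [_ [meetKU [joinKI _]]]]]]
          [_ [[_ [mulC mul1]] [_ [_ [imp_refl [mulDl imp_mul_trans]]]]]]].
  pose proof (le_trans A meet meetA) as le_trans.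
  pose proof (mul_le_monol A meet join mul meetC joinC meetKU joinKI mulDl) as mul_monol.
  pose proof (mul_le_monor A meet join mul meetC joinC meetKU joinKI mulC mulDl)
    as mul_monor.
  split.
  - intros imp_mulr a b c d.
    apply le_trans with (mul (imp (mul a c) (mul b c)) (imp c d)).
    { apply mul_monol, imp_mulr. }
    apply le_trans with (mul (imp (mul a c) (mul b c)) (imp (mul b c) (mul b d))).
    + apply mul_monor. rewrite (mulC b c), (mulC b d). apply imp_mulr.
    + apply imp_mul_trans.
  - intros imp_mul a b c.
    rewrite <- (mul1 (imp a b)), <- (imp_refl c). apply imp_mul.
Qed.
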